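(* In the FRNS model, suppose the performance vector at the beginning of the last week (week 3) is $W=[2,2,0,0]$. Then for every weight vector $V=[v_1,v_2,v_3,v_4]$ with $v_1\ge v_2\ge v_3\ge v_4>0$, $P^{(1)}_{(1,1,1,1)}(3,W,V)\ge P^{(1)}_{(0,1,1,1)}(3,W,V)$; that is, $a_1$ should try to win its last game.
   Context: FRNS model: four teams $a_1,\dots,a_4$ with weights $V=[v_1,v_2,v_3,v_4]$; $p_{ij}=v_i/(v_i+v_j)$. Regular season: week 1: $a_1$ vs $a_4$, $a_2$ vs $a_3$; week 2: $a_1$ vs $a_3$, $a_2$ vs $a_4$; week 3: $a_1$ vs $a_2$, $a_3$ vs $a_4$. Teams $a_2,a_3,a_4$ always try to win; $a_1$ either tries to win or loses intentionally. If both teams try, $a_i$ beats $a_j$ with probability $p_{ij}$ (games independent); if $a_1$ loses intentionally it loses that game with probability 1. $W=[W_1,\dots,W_4]$ gives numbers of wins before week $m$. After the season teams are seeded by total wins (descending), ties broken by assigning the tied seed positions uniformly at random; knockout tournament: seed 1 vs seed 4, seed 2 vs seed 3, winners meet in the final, each tournament game won by $a_i$ over $a_j$ with probability $p_{ij}$. $P^{(1)}_{\pi}(m,W,V)$ is the probability that $a_1$ wins the tournament when, in week $m$ starting from $W$, $a_1$ tries to win ($\pi=(1,1,1,1)$) or loses intentionally ($\pi=(0,1,1,1)$). *)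

From HB Require Import structures.
From mathcomp Require Import all_boot all_order all_algebra all_fingroup.
Set Implicit Arguments. Unset Strict Implicit. Unset Printing Implicit Defensive.
Import Order.TTheory GRing.Theory Num.Theory.
Local Open Scope ring_scope.

Section FRNS.
Variable R : realFieldType.

Definition pwin (V : 'I_4 -> R) (i j : 'I_4) : R := V i / (V i + V j).

(* Tournament with seeding s (s k = team holding seed k+1):
   seed1 vs seed4, seed2 vs seed3, winners meet in the final.
   Probability that team i wins the tournament. *)
Definition champ_prob (V : 'I_4 -> R) (s : {perm 'I_4}) (i : 'I_4) : R :=
  let t1 := s (inord 0) in let t2 := s (inord 1) in
  let t3 := s (inord 2) in let t4 := s (inord 3) in
  \sum_(w1 <- [:: t1; t4]) \sum_(w2 <- [:: t2; t3])
     (pwin V w1 (if w1 == t1 then t4 else t1)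
      * pwin V w2 (if w2 == t2 then t3 else t2)
      * ((if w1 == i then pwin V w1 w2 else 0)
         + (if w2 == i then pwin V w2 w1 else 0))).

Definition valid_seeding (Wf : 'I_4 -> nat) (s : {perm 'I_4}) : bool :=
  [forall k : 'I_4, forall l : 'I_4, (k < l)%N ==> (Wf (s l) <= Wf (s k))%N].

(* Ties broken by assigning tied seed positions uniformly at random:
   equivalently, the seeding is uniform among admissible seedings. *)
Definition tourn_prob (Wf : 'I_4 -> nat) (V : 'I_4 -> R) (i : 'I_4) : R :=
  (\sum_(s : {perm 'I_4} | valid_seeding Wf s) champ_prob V s i)
  / (#|[pred s : {perm 'I_4} | valid_seeding Wf s]|)%:R.

Definition a1 : 'I_4 := inord 0.
Definition a2 : 'I_4 := inord 1.
Definition a3 : 'I_4 := inord 2.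
Definition a4 : 'I_4 := inord 3.

(* Week 3 schedule: a1 vs a2, a3 vs a4.
   b12 = true iff a1 beats a2; b34 = true iff a3 beats a4.
   try1 = true : pi = (1,1,1,1) (a1 tries to win);
   try1 = false: pi = (0,1,1,1) (a1 loses intentionally). *)
Definition week3_final (W : 'I_4 -> nat) (b12 b34 : bool) : 'I_4 -> nat :=
  fun i => (W i + (if i == a1 then b12 else if i == a2 then ~~ b12
               else if i == a3 then b34 else if i == a4 then ~~ b34 else false))%N.

Definition game12_prob (try1 : bool) (V : 'I_4 -> R) (b12 : bool) : R :=
  if try1 then (if b12 then pwin V a1 a2 else pwin V a2 a1)
  else (if b12 then 0 else 1).

Definition game34_prob (V : 'I_4 -> R) (b34 : bool) : R :=
  if b34 then pwin V a3 a4 else pwin V a4 a3.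

Definition P1_week3 (try1 : bool) (W : 'I_4 -> nat) (V : 'I_4 -> R) : R :=
  \sum_(b12 : bool) \sum_(b34 : bool)
    game12_prob try1 V b12 * game34_prob V b34
    * tourn_prob (week3_final W b12 b34) V a1.

End FRNS.

Definition vec4 {T} (x0 x1 x2 x3 : T) (i : 'I_4) : T := nth x0 [:: x0; x1; x2; x3] i.

From mathcomp Require Import all_boot all_order all_algebra all_fingroup.
From mathcomp Require Import ring lra zify.
Import Order.TTheory GRing.Theory Num.Theory.
Local Open Scope ring_scope.

(* From W = [2,2,0,0] the last week always produces four distinct win totals,
   so the seeding is forced: the a1-a2 winner is seed 1, its loser seed 2, the
   a3-a4 winner seed 3 and its loser seed 4.  Trying therefore only matters
   when a1 actually beats a2, and then a1 meets the loser instead of the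
   winner of a3-a4 in the semifinal.  Averaged over that game the gain in a1's
   title probability is
     2 (v1 v2 (v3 - v4))^2 / ((v1+v2)(v3+v4)(v1+v3)(v1+v4)(v2+v3)(v2+v4)),
   so only the positivity of the weights is needed, not their ordering. *)

Lemma sorted_codom_ord_gtn (n : nat) (f : 'I_n -> nat) :
  {homo f : k l / (k < l)%N >-> (l < k)%N} -> sorted gtn (codom f).
Proof.
move=> f_dec; apply: homo_sorted f_dec _ _.
by move: (iota_ltn_sorted 0 n); rewrite -val_enum_ord sorted_map.
Qed.

Lemma valid_seeding_pred1 (Wf : 'I_4 -> nat) (s0 : {perm 'I_4}) :
  {homo Wf \o s0 : k l / (k < l)%N >-> (l < k)%N} ->
  valid_seeding Wf =1 pred1 s0.
Proof.
move=> s0_dec s; apply/idP/eqP => [/forallP s_valid | ->]; last first.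
  by apply/forallP => k; apply/forallP => l; apply/implyP => lt_kl; exact/ltnW/s0_dec.
have s0_inj : injective (Wf \o s0).
  move=> k l E; case: (ltngtP k l) => [lt_kl | lt_lk | /val_inj //].
  - by have := s0_dec _ _ lt_kl; rewrite [_ k]E ltnn.
  - by have := s0_dec _ _ lt_lk; rewrite [_ k]E ltnn.
have Wf_inj : injective Wf.
  move=> x y E; rewrite -(permKV s0 x) -(permKV s0 y); congr (s0 _).
  by apply: s0_inj; rewrite /= !permKV.
have s_dec : {homo Wf \o s : k l / (k < l)%N >-> (l < k)%N}.
  move=> k l lt_kl; rewrite ltn_neqAle (implyP (forallP (s_valid k) l) lt_kl) andbT.
  by apply/contraTneq: lt_kl => /Wf_inj /perm_inj ->; rewrite ltnn.
have codom_perm (t : {perm 'I_4}) : codom (Wf \o t) =i codom Wf.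
  move=> n; apply/codomP/codomP => [[k ->] | [x ->]]; first by exists (t k).
  by exists ((t^-1)%g x); rewrite /= permKV.
have same_codom : codom (Wf \o s) = codom (Wf \o s0).
  apply: (irr_sorted_eq (leT := gtn)).
  - by move=> m n p lt_nm lt_pn; exact: ltn_trans lt_pn lt_nm.
  - exact: ltnn.
  - exact: sorted_codom_ord_gtn.
  - exact: sorted_codom_ord_gtn.
  - by move=> n; rewrite codom_perm codom_perm.
apply/permP => k; apply: Wf_inj.
by apply: (proj2 (eq_in_map _ _ _) same_codom); rewrite mem_enum.
Qed.

Lemma tourn_prob_strict_seeding (Wf : 'I_4 -> nat) (s0 : {perm 'I_4})
    (R : realFieldType) (V : 'I_4 -> R) (i : 'I_4) :
  {homo Wf \o s0 : k l / (k < l)%N >-> (l < k)%N} ->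
  tourn_prob Wf V i = champ_prob V s0 i.
Proof.
move=> s0_dec; have valid_s0 := valid_seeding_pred1 _ _ s0_dec.
rewrite /tourn_prob (eq_bigl _ _ valid_s0) big_pred1_eq.
by rewrite (eq_card (B := pred1 s0)) ?card1 ?divr1.
Qed.

Lemma teamsE :
  [/\ a1 = @Ordinal 4 0 isT, a2 = @Ordinal 4 1 isT,
      a3 = @Ordinal 4 2 isT & a4 = @Ordinal 4 3 isT].
Proof. by split; apply/val_inj; rewrite /= inordK. Qed.

(* [week3_seeding b12 b34 k] holds seed k+1. *)
Definition week3_seeding (b12 b34 : bool) : {perm 'I_4} :=
  ((if b12 then 1 else tperm a1 a2) * (if b34 then 1 else tperm a3 a4))%g.

Lemma week3_final_seeding (b12 b34 : bool) (k : 'I_4) :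
  week3_final (vec4 2 2 0 0) b12 b34 (week3_seeding b12 b34 k) = (3 - k)%N.
Proof.
rewrite /week3_final /week3_seeding; case: teamsE => -> -> -> ->.
by case: b12; case: b34; case: k => [[|[|[|[|m]]]] hk] //; rewrite ?permM ?perm1 ?permE.
Qed.

Lemma P1_week3_try_sub_tank (R : realFieldType) (W : 'I_4 -> nat) (V : 'I_4 -> R) :
  V a1 + V a2 != 0 ->
  P1_week3 true W V - P1_week3 false W V =
  pwin V a1 a2 * \sum_(b34 : bool) game34_prob V b34 *
    (tourn_prob (week3_final W true b34) V a1 - tourn_prob (week3_final W false b34) V a1).
Proof.
move=> nz12; have p21 : pwin V a2 a1 = 1 - pwin V a1 a2.
  by rewrite /pwin addrC; field.
rewrite /P1_week3 /game12_prob !big_bool /= p21; ring.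
Qed.

Lemma champ_prob_week3_seeding_gap (R : realFieldType) (V : 'I_4 -> R) :
  (forall i, 0 < V i) ->
  \sum_(b34 : bool) game34_prob V b34 *
    (champ_prob V (week3_seeding true b34) a1 - champ_prob V (week3_seeding false b34) a1)
  = 2 * (V a1 * V a2 * (V a3 - V a4)) ^+ 2 /
    ((V a1 + V a2) * (V a3 + V a4) * (V a1 + V a3) * (V a1 + V a4) * (V a2 + V a3) * (V a2 + V a4)).
Proof.
move=> V_gt0; have nz i j : V i + V j != 0 by rewrite gt_eqF ?addr_gt0.
rewrite /champ_prob /game34_prob /week3_seeding -/a1 -/a2 -/a3 -/a4 big_bool /=.
case: teamsE => -> -> -> ->.
rewrite !big_cons !big_nil ?permM ?perm1 ?permE /= /pwin.
field; by rewrite !nz.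
Qed.

Lemma tourn_prob_week3 (R : realFieldType) (V : 'I_4 -> R) (b12 b34 : bool) (i : 'I_4) :
  tourn_prob (week3_final (vec4 2 2 0 0) b12 b34) V i = champ_prob V (week3_seeding b12 b34) i.
Proof.
apply: tourn_prob_strict_seeding => k l lt_kl /=; rewrite !week3_final_seeding.
by have := ltn_ord l; lia.
Qed.

Theorem theorem3 (R : realFieldType) (v1 v2 v3 v4 : R) :
  v2 <= v1 -> v3 <= v2 -> v4 <= v3 -> 0 < v4 ->
  P1_week3 false (vec4 2%N 2%N 0%N 0%N) (vec4 v1 v2 v3 v4)
  <= P1_week3 true (vec4 2%N 2%N 0%N 0%N) (vec4 v1 v2 v3 v4).
Proof.
move=> le21 le32 le43 v4_gt0; set V := vec4 v1 v2 v3 v4.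
have V_gt0 i : 0 < V i.
  by rewrite /V /vec4; case: i => [[|[|[|[|m]]]] hi] //=; lra.
have V_ge0 i : 0 <= V i by exact/ltW.
rewrite -subr_ge0 P1_week3_try_sub_tank ?gt_eqF ?addr_gt0 //.
under eq_bigr do rewrite !tourn_prob_week3.
rewrite champ_prob_week3_seeding_gap //; apply: mulr_ge0.
  by rewrite /pwin divr_ge0 ?addr_ge0.
apply: divr_ge0; first by rewrite mulr_ge0 ?sqr_ge0.
by rewrite !mulr_ge0 ?addr_ge0.
Qed.
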